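(* Let $\mathbf{u}$ be a $1$-balanced sequence over $\{a,b\}$, let $\mathbf{a}=1^{\omega}$ (the constant sequence $111\cdots$), and let $\mathbf{b}=b_0b_1b_2\cdots$ be a $1$-balanced sequence over $\{2,3\}$. Then the ternary sequence $\mathbf{v}=\mathrm{colour}(\mathbf{u},\mathbf{a},\mathbf{b})$ is $2$-balanced.
   Context: A sequence $\mathbf{u}$ over an alphabet $\mathcal A$ is $C$-balanced ($C\ge 1$ an integer) if for any two factors $u,v$ of $\mathbf{u}$ with $|u|=|v|$ and every letter $x\in\mathcal A$ we have $\bigl||u|_x-|v|_x\bigr|\le C$, where $|w|_x$ is the number of occurrences of $x$ in $w$. Colouring: given a sequence $\mathbf{u}$ over $\{a,b\}$ and sequences $\mathbf{a},\mathbf{b}$ over disjoint alphabets $\mathcal A,\mathcal B$, $\mathrm{colour}(\mathbf{u},\mathbf{a},\mathbf{b})$ is the sequence over $\mathcal A\cup\mathcal B$ obtained from $\mathbf{u}$ by replacing the subsequence of all occurrences of $a$ (in order) by the sequence $\mathbf{a}$ and the subsequence of all occurrences of $b$ (in order) by the sequence $\mathbf{b}$. *)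

From mathcomp Require Import all_boot.
Set Implicit Arguments. Unset Strict Implicit. Unset Printing Implicit Defensive.

Definition factor (T : Type) (u : nat -> T) (i n : nat) : seq T :=
  mkseq (fun k => u (i + k)) n.

Definition occ (T : eqType) (x : T) (w : seq T) : nat := count_mem x w.

(* u is C-balanced: for all factors w, w' of equal length and every letter x,
   | |w|_x - |w'|_x | <= C.  (Letters outside the alphabet occur 0 times,
   so quantifying over all x : T is the same as over the alphabet.) *)
Definition balanced (T : eqType) (C : nat) (u : nat -> T) : Prop :=
  forall (i j n : nat) (x : T),
    occ x (factor u i n) <= occ x (factor u j n) + C.

(* colour(u, a, b) for u over {a,b} encoded as bool (true = letter a,
   false = letter b): the k-th occurrence of a is replaced by a k, the
   k-th occurrence of b by b k. *)
Definition colour (T : Type) (u : nat -> bool) (a b : nat -> T) : nat -> T :=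
  fun n => if u n then a (count id (mkseq u n))
           else b (count negb (mkseq u n)).

From mathcomp Require Import all_boot.

Set Implicit Arguments.
Unset Strict Implicit.
Unset Printing Implicit Defensive.

(* A factor of colour(u, a, b) with [m] occurrences of a and [m'] of b in
   the corresponding factor of u splits, letter by letter, into a factor of
   a of length m and a factor of b of length m'. Here a = 1^omega and 1 does
   not occur in b, so the letter 1 is counted exactly as the letter a of u
   (1-balanced). Any other letter is counted in a factor of b whose length is
   the number of b's in a factor of u; these lengths differ by at most one,
   which costs one unit on top of the 1-balance of b. *)

Section Factors.

Variable T : Type.
Implicit Type w : nat -> T.

Lemma factorD w i m d :
  factor w i (m + d) = factor w i m ++ factor w (i + m) d.
Proof.
rewrite /factor /mkseq iotaD map_cat add0n -{2}[m]addn0 iotaDl -map_comp.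
by congr (_ ++ _); apply: eq_map => k /=; rewrite addnA.
Qed.

Lemma factorS w i n : factor w i n.+1 = rcons (factor w i n) (w (i + n)).
Proof. by rewrite -addn1 factorD cats1 /factor /= addn0. Qed.

Lemma mkseqD w i n : mkseq w (i + n) = mkseq w i ++ factor w i n.
Proof.
have factor0 k : factor w 0 k = mkseq w k by apply: eq_mkseq => j; rewrite add0n.
by rewrite -!factor0 factorD.
Qed.

End Factors.

Section Occurrences.

Variable T : eqType.
Implicit Types (w : nat -> T) (x : T).

Lemma occ_rcons x s y : occ x (rcons s y) = occ x s + (y == x).
Proof. by rewrite /occ -cats1 count_cat /= addn0. Qed.

Lemma occ_factor_leq w x i m n :
  m <= n -> occ x (factor w i m) <= occ x (factor w i n).
Proof.
by move/subnKC <-; rewrite factorD /occ count_cat leq_addr.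
Qed.

Lemma occ_factorD_leq w x i m d :
  occ x (factor w i (m + d)) <= occ x (factor w i m) + d.
Proof.
rewrite factorD /occ count_cat leq_add2l.
by apply: leq_trans (count_size _ _) _; rewrite size_mkseq.
Qed.

Lemma occ_factor_avoid w x :
  (forall k, w k != x) -> forall i n, occ x (factor w i n) = 0.
Proof.
move=> wx i n; rewrite /occ /factor /mkseq count_map -[RHS](count_pred0 (iota 0 n)).
by apply: eq_count => k /=; exact: negbTE.
Qed.

Lemma occ_factor_const x i n : occ x (factor (fun=> x) i n) = n.
Proof.
rewrite /occ /factor /mkseq count_map -[RHS](size_iota 0) -count_predT.
by apply: eq_count => k /=; rewrite eqxx.
Qed.

Lemma balanced_occ_factor_leq C w x i j m n d :
  balanced C w -> m <= n + d ->
  occ x (factor w i m) <= occ x (factor w j n) + C + d.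
Proof.
move=> balw mnd.
apply: leq_trans (occ_factor_leq w x i mnd) _.
by apply: leq_trans (occ_factorD_leq w x i n d) _; rewrite leq_add2r.
Qed.

End Occurrences.

Lemma occ_factor_colour (T : eqType) (u : nat -> bool) (a b : nat -> T) x i n :
  occ x (factor (colour u a b) i n) =
    occ x (factor a (count id (mkseq u i)) (count id (factor u i n))) +
    occ x (factor b (count negb (mkseq u i)) (count negb (factor u i n))).
Proof.
elim: n => [|n IH]; first by rewrite /factor /= addn0.
rewrite !factorS occ_rcons IH -!cats1 !count_cat /= /colour mkseqD !count_cat.
case: (u (i + n)) => /=; rewrite !addn0 ?addn1 factorS occ_rcons.
  by rewrite addnAC.
by rewrite addnA.
Qed.

Theorem lemma1 (u : nat -> bool) (b : nat -> nat) :
  balanced 1 u ->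
  (forall k, b k = 2 \/ b k = 3) ->
  balanced 1 b ->
  balanced 2 (colour u (fun _ => 1) b).
Proof.
move=> balu b23 balb i j n x.
have occ_bool (c : bool) s : occ c s = count (if c then id else negb) s.
  by apply: eq_count; case: c; case.
rewrite !occ_factor_colour.
have [->|x1] := eqVneq x 1.
  have b_not1 k : b k != 1 by case: (b23 k) => ->.
  rewrite !(occ_factor_avoid b_not1) !addn0 !occ_factor_const.
  have := balu i j n true; rewrite !occ_bool => /leq_trans; apply.
  by rewrite leq_add2l.
have one_not_x (k : nat) : 1 != x by rewrite eq_sym.
rewrite !(occ_factor_avoid one_not_x) !add0n -(addn1 1) addnA.
apply: balanced_occ_factor_leq balb _.
by have := balu i j n false; rewrite !occ_bool.
Qed.
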